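(* Let $P,Q_1,Q_2\in K\langle\partial_t\rangle$ be monic with $P=Q_1Q_2$, and suppose $Q_2$ is semisplit. Then $P$ is semisplit if and only if $Q_1$ is semisplit.
   Context: Let $k$ be an algebraically closed field of characteristic zero and $K=k(t,x_1,\dots,x_n)$ with the commuting derivations $\partial_t=\partial/\partial t$ and $\partial_{x_i}=\partial/\partial x_i$. Let $\mathcal U$ be a universal differential extension field of $K$ (in the sense of Kolchin), with commuting derivations extending these. Set $C_t=\{c\in\mathcal U\mid\partial_t(c)=0\}$ and $C_{\mathbf x}=\{c\in\mathcal U\mid \partial_{x_i}(c)=0\text{ for all }i\}$. An element $f\in\mathcal U$ is split if $f=gh$ with $g\in C_t$, $h\in C_{\mathbf x}$, and semisplit if it is a finite sum of split elements. A nonzero operator $P\in K\langle\partial_t\rangle$ is semisplit if it is monic and all of its coefficients are semisplit. *)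

From HB Require Import structures.
From mathcomp Require Import all_boot all_order all_algebra.
From mathcomp Require Import mpoly.
Set Implicit Arguments. Unset Strict Implicit. Unset Printing Implicit Defensive.
Import Order.TTheory GRing.Theory Num.Theory.
Local Open Scope ring_scope.

Section DiffDefs.
Variable (m : nat) (U : fieldType) (D : 'I_m -> U -> U).

Definition is_derivation (d : U -> U) : Prop :=
  (forall a b, d (a + b) = d a + d b) /\ (forall a b, d (a * b) = d a * b + a * d b).

Definition diff_field : Prop :=
  (forall i, is_derivation (D i)) /\ (forall i j a, D i (D j a) = D j (D i a)).

Definition dsubfield (S : U -> Prop) : Prop :=
  S 0 /\ S 1 /\ (forall a b, S a -> S b -> S (a - b)) /\
  (forall a b, S a -> S b -> S (a * b)) /\ (forall a, S a -> S a^-1) /\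
  (forall i a, S a -> S (D i a)).

Definition dgen (A : U -> Prop) (y : U) : Prop :=
  forall S, dsubfield S -> (forall a, A a -> S a) -> S y.

End DiffDefs.

(* Kolchin: U is a universal differential extension field of the differential
   subfield K: for every differential field F, finitely generated over K inside U,
   every finitely generated differential extension G of F embeds (differentially)
   into U over F. The extension F -> G is given by a differential field morphism j
   (defined on F). *)
Definition universal_over (m : nat) (U : fieldType) (D : 'I_m -> U -> U)
    (K : U -> Prop) : Prop :=
  forall (s : seq U) (G : fieldType) (DG : 'I_m -> G -> G) (j : U -> G) (sG : seq G),
  let F := dgen D (fun a => K a \/ a \in s) in
  diff_field DG ->
  j 1 = 1 ->
  (forall a b, F a -> F b -> j (a + b) = j a + j b /\ j (a * b) = j a * j b) ->
  (forall i a, F a -> j (D i a) = DG i (j a)) ->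
  (forall y, dgen DG (fun b => (exists2 a, F a & b = j a) \/ b \in sG) y) ->
  exists e : G -> U,
    [/\ e 1 = 1, (forall b c, e (b + c) = e b + e c),
        (forall b c, e (b * c) = e b * e c),
        (forall i b, e (DG i b) = D i (e b))
      & (forall a, F a -> e (j a) = a)].

Definition dt (n : nat) (U : Type) (D : 'I_n.+1 -> U -> U) := D ord0.
Definition dx (n : nat) (U : Type) (D : 'I_n.+1 -> U -> U) (i : 'I_n) := D (lift ord0 i).

(* the point (t, x_1, ..., x_n) of U^(n+1) *)
Definition tx (n : nat) (U : Type) (t : U) (x : 'I_n -> U) (i : 'I_n.+1) : U :=
  oapp x t (unlift ord0 i).

Definition evk (k : closedFieldType) (n : nat) (U : fieldType)
    (iota : {rmorphism k -> U}) (t : U) (x : 'I_n -> U) (p : {mpoly k[n.+1]}) : U :=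
  (map_mpoly iota p).@[tx t x].

(* iota(k)(t, x_1, ..., x_n) is a copy of the differential field
   K = k(t, x_1, ..., x_n) with the standard partial derivations *)
Definition is_K_setup (k : closedFieldType) (n : nat) (U : fieldType)
    (D : 'I_n.+1 -> U -> U) (iota : {rmorphism k -> U}) (t : U) (x : 'I_n -> U) : Prop :=
  (forall i c, D i (iota c) = 0) /\
  dt D t = 1 /\ (forall i, dt D (x i) = 0) /\
  (forall i, dx D i t = 0) /\
  (forall i j, dx D i (x j) = (i == j)%:R) /\
  (forall p : {mpoly k[n.+1]}, evk iota t x p = 0 -> p = 0).

Definition inK (k : closedFieldType) (n : nat) (U : fieldType)
    (iota : {rmorphism k -> U}) (t : U) (x : 'I_n -> U) (f : U) : Prop :=
  exists p q : {mpoly k[n.+1]},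
    evk iota t x q != 0 /\ f = evk iota t x p / evk iota t x q.

Definition Ct (n : nat) (U : fieldType) (D : 'I_n.+1 -> U -> U) (c : U) : Prop :=
  dt D c = 0.
Definition Cx (n : nat) (U : fieldType) (D : 'I_n.+1 -> U -> U) (c : U) : Prop :=
  forall i, dx D i c = 0.
Definition split_elt (n : nat) (U : fieldType) (D : 'I_n.+1 -> U -> U) (f : U) : Prop :=
  exists g h, [/\ Ct D g, Cx D h & f = g * h].
Definition semisplit (n : nat) (U : fieldType) (D : 'I_n.+1 -> U -> U) (f : U) : Prop :=
  exists s : seq U, (forall g, g \in s -> split_elt D g) /\ f = \sum_(g <- s) g.

(* Ore operators sum_i a_i d^i are represented by their coefficient polynomial
   sum_i a_i 'X^i in {poly U}; ore_mul d is the product of the Ore ring U<d>: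
   (a d^i)(q) = a sum_l C(i,l) d^l(q) d^(i-l). *)
Definition ore_mul (U : fieldType) (d : U -> U) (p q : {poly U}) : {poly U} :=
  \sum_(0 <= i < size p) \sum_(0 <= l < i.+1)
     (p`_i * ('C(i, l))%:R) *: (map_poly (iter l d) q * 'X^(i - l)).

Definition inKop (k : closedFieldType) (n : nat) (U : fieldType)
    (iota : {rmorphism k -> U}) (t : U) (x : 'I_n -> U) (P : {poly U}) : Prop :=
  forall i, inK iota t x P`_i.

Definition semisplit_op (n : nat) (U : fieldType) (D : 'I_n.+1 -> U -> U)
    (P : {poly U}) : Prop :=
  P \is monic /\ forall i, semisplit D P`_i.

From HB Require Import structures.
From mathcomp Require Import all_boot all_order all_algebra.
From mathcomp Require Import mpoly.
From mathcomp Require Import zify.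
Set Implicit Arguments. Unset Strict Implicit.
Import GRing.Theory.
Local Open Scope ring_scope.

(* The semisplit elements form a subring of U which is
   stable under d/dt (a split element g*h with g in C_t, h in C_x has
   derivative g * dt h, again split).  The theorem is then an instance of two
   purely algebraic facts about the Ore product (p, q) |-> p * q in U<d>,
   valid for ANY map d and ANY subring S of U stable under d:
   - closure: if p and q have coefficients in S, so does p * q, because every
     coefficient of p * q is a sum of products of coefficients of p, binomial
     integers and iterated d-images of coefficients of q;
   - cancellation: if q is monic with coefficients in S and p * q has
     coefficients in S, then so has p.  Indeed, with d2 = deg q, the
     coefficient of p * q at j + d2 equals p_j plus terms involving only the
     p_i with i > j, so the coefficients of p lie in S by downward induction. *)

Definition stable_subring {U : pzRingType} (d : U -> U) (S : U -> Prop) : Prop :=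
  [/\ S 1, (forall a b, S a -> S b -> S (a - b)),
      (forall a b, S a -> S b -> S (a * b)) & (forall a, S a -> S (d a))].

Section StableSubring.
Variables (U : pzRingType) (d : U -> U) (S : U -> Prop).
Hypothesis hS : stable_subring d S.

Lemma stable1 : S 1. Proof. by case: hS => S1 _ _ _. Qed.

Lemma stableB a b : S a -> S b -> S (a - b). Proof. by case: hS => _ SB _ _; apply: SB. Qed.

Lemma stableM a b : S a -> S b -> S (a * b). Proof. by case: hS => _ _ SM _; apply: SM. Qed.

Lemma stable0 : S 0.
Proof. by rewrite -(subrr 1); apply: stableB; apply: stable1. Qed.

Lemma stableD a b : S a -> S b -> S (a + b).
Proof.
move=> Sa Sb; rewrite -[b]opprK -[- b]sub0r.
by apply: stableB => //; apply: stableB => //; apply: stable0.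
Qed.

Lemma stable_sum (I : eqType) (r : seq I) (P : pred I) (F : I -> U) :
  (forall i, i \in r -> P i -> S (F i)) -> S (\sum_(i <- r | P i) F i).
Proof.
move=> SF; rewrite big_seq_cond; apply: big_ind => [|a b|i /andP[]].
- exact: stable0.
- exact: stableD.
- exact: SF.
Qed.

Lemma stable_nat m : S m%:R.
Proof.
elim: m => [|m IH]; first exact: stable0.
by rewrite -addn1 natrD; apply: stableD => //; apply: stable1.
Qed.

Lemma stable_iter l a : S a -> S (iter l d a).
Proof. by case: hS => _ _ _ Sd Sa; elim: l => //= l; apply: Sd. Qed.

Lemma stable_sum_except (I : eqType) (r : seq I) (F : I -> U) i0 :
  uniq r -> i0 \in r -> (forall i, i \in r -> i != i0 -> S (F i)) ->
  S (\sum_(i <- r) F i) -> S (F i0).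
Proof.
move=> ur ri0 SF; rewrite (bigD1_seq i0) //= => Ssum.
rewrite -(addrK (\sum_(i <- r | i != i0) F i) (F i0)).
by apply: stableB => //; apply: stable_sum.
Qed.

End StableSubring.

Section OreProduct.
Variables (U : fieldType) (d : U -> U).

(* The contribution of the monomial p_i d^i and of the l-th Leibniz term to
   the m-th coefficient of the Ore product p * q. *)
Definition ore_term (p q : {poly U}) (m i l : nat) : U :=
  p`_i * ('C(i, l))%:R *
  (if (i - l <= m)%N && (m - (i - l) < size q)%N then iter l d q`_(m - (i - l)) else 0).

Lemma ore_mul_coef (p q : {poly U}) (m : nat) :
  (ore_mul d p q)`_m = \sum_(0 <= i < size p) \sum_(0 <= l < i.+1) ore_term p q m i l.
Proof.
rewrite /ore_mul coef_sum; apply: eq_bigr => i _; rewrite coef_sum.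
apply: eq_bigr => l _; rewrite coefZ coefMXn /ore_term /map_poly coef_poly.
by case: ltnP => /= _; rewrite ?mulr0.
Qed.

Variable S : U -> Prop.
Hypothesis hS : stable_subring d S.

Lemma ore_term_stable (p q : {poly U}) (m i l : nat) :
  S p`_i -> (forall k, S q`_k) -> S (ore_term p q m i l).
Proof.
move=> Sp Sq; apply: (stableM hS); first by apply: (stableM hS) => //; apply: (stable_nat hS).
by case: ifP => _; [apply: (stable_iter hS) | apply: (stable0 hS)].
Qed.

Lemma ore_mul_stable (p q : {poly U}) :
  (forall k, S p`_k) -> (forall k, S q`_k) -> forall m, S (ore_mul d p q)`_m.
Proof.
move=> Sp Sq m; rewrite ore_mul_coef.
by do 2!apply: (stable_sum hS) => ? _ _; apply: ore_term_stable.
Qed.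

Lemma ore_term_lead (p q : {poly U}) (j : nat) :
  ore_term p q (j + (size q).-1) j 0 = p`_j * lead_coef q.
Proof.
rewrite /ore_term bin0 mulr1 subn0 leq_addr addKn /= lead_coefE.
by case: ltnP => // qs; rewrite (nth_default _ qs).
Qed.

Lemma ore_term_vanish (p q : {poly U}) (j i l : nat) :
  (l <= i <= j)%N -> (i != j) || (l != 0)%N -> ore_term p q (j + (size q).-1) i l = 0.
Proof.
move=> /andP[li ij] nij; rewrite /ore_term ifN ?mulr0 //.
by apply/negP => /andP[_]; move: nij => /orP[/eqP|/eqP]; lia.
Qed.

Lemma ore_mul_cancel (p q : {poly U}) : q \is monic -> (forall k, S q`_k) ->
  (forall m, S (ore_mul d p q)`_m) -> forall j, S p`_j.
Proof.
move=> mq Sq Spq; have S0 := stable0 hS.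
suff Sp kk : forall j, (size p <= j + kk)%N -> S p`_j.
  by move=> j; apply: (Sp (size p)); rewrite leq_addl.
elim: kk => [|kk IH] j hj; have [jp|pj] := ltnP j (size p);
  try by rewrite nth_default.
  by rewrite addn0 leqNgt jp in hj.
rewrite -[p`_j]mulr1 -(monicP mq) -ore_term_lead.
have Sinner : S (\sum_(0 <= l < j.+1) ore_term p q (j + (size q).-1) j l).
  move: (Spq (j + (size q).-1)); rewrite ore_mul_coef.
  apply: (stable_sum_except hS); rewrite ?iota_uniq ?mem_index_iota ?jp //.
  move=> i; rewrite mem_index_iota => /andP[_ ip] nij.
  apply: (stable_sum hS) => l; rewrite mem_index_iota => /andP[_ li] _.
  have [ji|ij] := ltnP j i; first by apply: ore_term_stable => //; apply: IH; lia.
  by rewrite ore_term_vanish ?nij //; apply/andP.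
move: Sinner; apply: (stable_sum_except hS); rewrite ?iota_uniq ?mem_index_iota //.
move=> l; rewrite mem_index_iota => /andP[_ lj] nl0.
by rewrite ore_term_vanish ?nl0 ?orbT // leqnn andbT.
Qed.

End OreProduct.

Section Semisplit.
Variables (n : nat) (U : fieldType) (D : 'I_n.+1 -> U -> U).
Hypothesis hD : diff_field D.

Lemma derD i a b : D i (a + b) = D i a + D i b.
Proof. by have [] := hD.1 i. Qed.

Lemma derM i a b : D i (a * b) = D i a * b + a * D i b.
Proof. by have [] := hD.1 i. Qed.

Lemma der0 i : D i 0 = 0.
Proof. by apply: (@addrI _ (D i 0)); rewrite -derD !addr0. Qed.

Lemma derN i a : D i (- a) = - D i a.
Proof. by apply: (@addrI _ (D i a)); rewrite -derD !subrr der0. Qed.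

Lemma der1 i : D i 1 = 0.
Proof.
have := derM i 1 1; rewrite !mulr1 mul1r => e.
by apply: (@addrI _ (D i 1)); rewrite addr0 -e.
Qed.

Lemma split_one : split_elt D 1.
Proof.
exists 1, 1; split; last by rewrite mulr1.
- by rewrite /Ct /dt der1.
- by move=> i; rewrite /dx der1.
Qed.

Lemma split_opp g : split_elt D g -> split_elt D (- g).
Proof.
move=> [a [b [Ca Cb ->]]]; exists (- a), b; split => //; last by rewrite mulNr.
by rewrite /Ct /dt derN -/(dt D a) Ca oppr0.
Qed.

Lemma split_mul g h : split_elt D g -> split_elt D h -> split_elt D (g * h).
Proof.
move=> [a1 [b1 [Ca1 Cb1 ->]]] [a2 [b2 [Ca2 Cb2 ->]]].
exists (a1 * a2), (b1 * b2); split; last by rewrite mulrACA.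
- by rewrite /Ct /dt derM -!/(dt D _) Ca1 Ca2 mul0r mulr0 addr0.
- by move=> i; rewrite /dx derM -!/(dx D i _) Cb1 Cb2 mul0r mulr0 addr0.
Qed.

(* d/dt of a split element g h (dt g = 0) is the split element g (dt h):
   dt h is still an x-constant because the derivations commute. *)
Lemma split_dt g : split_elt D g -> split_elt D (dt D g).
Proof.
move=> [a [b [Ca Cb ->]]]; exists a, (dt D b); split => //.
- by move=> i; rewrite /dx /dt hD.2 -/(dx D i b) Cb der0.
- by rewrite /dt derM -/(dt D a) Ca mul0r add0r.
Qed.

Lemma semisplit_split g : split_elt D g -> semisplit D g.
Proof.
by move=> sg; exists [:: g]; rewrite big_seq1; split => // y; rewrite inE => /eqP->.
Qed.

Lemma semisplit0 : semisplit D 0.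
Proof. by exists [::]; rewrite big_nil. Qed.

Lemma semisplit_ind (P : U -> Prop) : P 0 -> (forall a b, P a -> P b -> P (a + b)) ->
  (forall g, split_elt D g -> P g) -> forall f, semisplit D f -> P f.
Proof.
move=> P0 PD Psplit f [s [ss ->]]; rewrite big_seq.
by apply: big_ind => // g /ss; apply: Psplit.
Qed.

Lemma semisplitD a b : semisplit D a -> semisplit D b -> semisplit D (a + b).
Proof.
move=> [s1 [h1 ->]] [s2 [h2 ->]]; exists (s1 ++ s2); split; last by rewrite big_cat.
by move=> g; rewrite mem_cat => /orP[/h1|/h2].
Qed.

Lemma semisplit_stable : stable_subring (dt D) (semisplit D).
Proof.
split.
- exact/semisplit_split/split_one.
- move=> a b Sa Sb; apply: semisplitD => //; move: b Sb.
  apply: semisplit_ind; first by rewrite oppr0; apply: semisplit0.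
    by move=> b c Sb Sc; rewrite opprD; apply: semisplitD.
  by move=> g sg; apply/semisplit_split/split_opp.
- move=> a b Sa; move: b; apply: semisplit_ind.
  + by rewrite mulr0; apply: semisplit0.
  + by move=> b c Sb Sc; rewrite mulrDr; apply: semisplitD.
  move=> h sh; move: a Sa; apply: semisplit_ind.
  + by rewrite mul0r; apply: semisplit0.
  + by move=> a b Sa Sb; rewrite mulrDl; apply: semisplitD.
  by move=> g sg; apply/semisplit_split/split_mul.
- apply: semisplit_ind; first by rewrite /dt der0; apply: semisplit0.
    by move=> a b Sa Sb; rewrite /dt derD; apply: semisplitD.
  by move=> g sg; apply/semisplit_split/split_dt.
Qed.

End Semisplit.

Theorem mainTheorem10
  (k : closedFieldType) (hk : [pchar k] =i pred0) (n : nat)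
  (U : fieldType) (D : 'I_n.+1 -> U -> U)
  (iota : {rmorphism k -> U}) (t : U) (x : 'I_n -> U)
  (hD : diff_field D) (hK : is_K_setup D iota t x)
  (hU : universal_over D (inK iota t x))
  (P Q1 Q2 : {poly U})
  (hP : inKop iota t x P) (hQ1 : inKop iota t x Q1) (hQ2 : inKop iota t x Q2)
  (mP : P \is monic) (mQ1 : Q1 \is monic) (mQ2 : Q2 \is monic)
  (hPQ : P = ore_mul (dt D) Q1 Q2)
  (sQ2 : semisplit_op D Q2) :
  semisplit_op D P <-> semisplit_op D Q1.
Proof.
have hS := semisplit_stable hD.
have [_ sQ2c] := sQ2.
split=> [[_ sPc] | [_ sQ1c]]; split => //.
- by apply: (ore_mul_cancel hS mQ2 sQ2c); rewrite -hPQ.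
- by rewrite hPQ; apply: ore_mul_stable.
Qed.
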